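(* Let $\delta\in(0,1)$, let $\mathbf{k}$ be a reproducing kernel, and run $\mathrm{KH}(\delta)$ on an input sequence $\mathcal{X}_{\mathrm{in}}=(x_i)_{i=1}^{n_{\mathrm{in}}}$ with $n_{\mathrm{in}}\ge2$ even. Then there is an event $\mathcal{E}$ with probability at least $1-\delta/2$ such that, for all $i\in[n_{\mathrm{in}}/2]$, $\frac{1}{2i}\psi_i$ is $(\mathbf{k},\nu_i)$-sub-Gaussian on $\mathcal{E}$ with $$\nu_i=b_{\max,i}\frac{\sqrt{\log(2n_{\mathrm{in}}/\delta)}}{2i}=\frac{\sqrt{\log(2n_{\mathrm{in}}/\delta)}}{2i}\max_{j\in[i]}\mathrm{MMD}_{\mathbf{k}}(\delta_{x_{2j-1}},\delta_{x_{2j}})\le\frac{\sqrt{\log(2n_{\mathrm{in}}/\delta)}}{2i}\cdot2\min\Big(\max_{x\in\mathcal{X}_{\mathrm{in}}}\sqrt{\mathbf{k}(x,x)},\ \max_{x\in\mathcal{X}_{\mathrm{in}}}\mathrm{MMD}_{\mathbf{k}}(\delta_x,\mathbb{P}_{\mathrm{in}})\Big).$$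
   Context: Kernel Halving $\mathrm{KH}(\delta)$: input $(x_1,\dots,x_{n_{\mathrm{in}}})$ with $n_{\mathrm{in}}$ even and kernel $\mathbf{k}$ with RKHS $\mathcal{H}_{\mathbf{k}}$. Set ordered lists $S_1=S_2=\emptyset$, $\psi_0=0\in\mathcal{H}_{\mathbf{k}}$, $b_{\max,0}=0$. For $i=1,\dots,n_{\mathrm{in}}/2$: let $(x,x')=(x_{2i-1},x_{2i})$, $f_i=\mathbf{k}(x_{2i-1},\cdot)-\mathbf{k}(x_{2i},\cdot)$, $b_i=\|f_i\|_{\mathbf{k}}=\sqrt{\mathbf{k}(x,x)+\mathbf{k}(x',x')-2\mathbf{k}(x,x')}$, $b_{\max,i}=\max(b_i,b_{\max,i-1})$, $a_i=b_ib_{\max,i}(\tfrac12+\log(2n_{\mathrm{in}}/\delta))$, $\alpha_i=\langle\psi_{i-1},f_i\rangle_{\mathbf{k}}=\sum_{j=1}^{2i-2}(\mathbf{k}(x_j,x)-\mathbf{k}(x_j,x'))-2\sum_{z\in S_1}(\mathbf{k}(z,x)-\mathbf{k}(z,x'))$. With probability $\min(1,\tfrac12(1-\alpha_i/a_i)_+)$ (fresh randomness) set $\eta_i=1$ and swap $x$ and $x'$; otherwise $\eta_i=-1$. Append $x$ to $S_1$, $x'$ to $S_2$, set $\psi_i=\psi_{i-1}+\eta_if_i$ (so $\psi_i=\sum_{y\in S_2}\mathbf{k}(y,\cdot)-\sum_{y\in S_1}\mathbf{k}(y,\cdot)$). Output $\mathcal{X}_{\mathrm{out}}=S_1$. Here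 $(a)_+=\max(a,0)$. $\mathbb{P}_{\mathrm{in}}$ is the empirical distribution of $\mathcal{X}_{\mathrm{in}}$, $\delta_x$ the point mass at $x$, and $\mathrm{MMD}_{\mathbf{k}}(\mu,\tilde\mu)=\sup_{\|f\|_{\mathbf{k}}\le1}|\mathbb{E}_\mu f-\mathbb{E}_{\tilde\mu}f|$. A random $\phi\in\mathcal{H}_{\mathbf{k}}$ is $(\mathbf{k},\nu)$-sub-Gaussian on $\mathcal{E}$ if $\mathbb{E}[\exp(\langle f,\phi\rangle_{\mathbf{k}})\mathbf{1}_{\mathcal{E}}]\le\exp(\frac{\nu^2}{2}\|f\|_{\mathbf{k}}^2)$ for all $f\in\mathcal{H}_{\mathbf{k}}$. *)

From HB Require Import structures.
From mathcomp Require Import all_boot all_order all_algebra.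
From mathcomp Require Import boolp classical_sets reals.
From mathcomp.analysis Require Import sequences exp.
Set Implicit Arguments. Unset Strict Implicit. Unset Printing Implicit Defensive.
Import Order.TTheory GRing.Theory Num.Theory.
Local Open Scope ring_scope.

(* The RKHS H_k is represented by such a
   space together with a feature map Phi with k y z = <Phi y, Phi z>;
   a function f in H_k is represented by g : H, with f(y) = <g, Phi y>. *)
Definition inner_product (R : realType) (H : lmodType R) (ip : H -> H -> R) : Prop :=
  [/\ forall u v, ip u v = ip v u,
      forall a u v w, ip (a *: u + v) w = a * ip u w + ip v w,
      forall v, 0 <= ip v v &
      forall v, ip v v = 0 -> v = 0].

Section KernelHalving.
Variables (R : realType) (X : Type) (H : lmodType R) (ip : H -> H -> R)
  (Phi : X -> H) (k : X -> X -> R) (m : nat) (x : nat -> X) (delta : R).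

(* Input X_in = (x 0, ..., x (2m-1)), n_in = 2m; the paper's pair
   (x_{2i-1}, x_{2i}) (i = 1..m) is (x (2j), x (2j+1)) with j = i-1. *)
Definition n_in : nat := (2 * m)%N.
Definition logterm : R := ln (2 * n_in%:R / delta).

(* f_{j+1} and b_{j+1} (0-based step index j) *)
Definition fv (j : nat) : H := Phi (x (2 * j)) - Phi (x (2 * j).+1).
Definition bb (j : nat) : R :=
  Num.sqrt (k (x (2 * j)) (x (2 * j)) + k (x (2 * j).+1) (x (2 * j).+1)
            - 2 * k (x (2 * j)) (x (2 * j).+1)).
(* b_{max,i} (paper's 1-based i), with b_{max,0} = 0 *)
Definition bmax (i : nat) : R := \big[Num.max/0]_(j < i) bb j.

(* Outcomes of the algorithm's randomness: the sign sequence
   (e j = true  <->  eta_{j+1} = +1, i.e. the pair was swapped). *)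
Definition signs := {ffun 'I_m -> bool}.

Definition psi (e : signs) (i : nat) : H :=
  \sum_(j < m | (j < i)%N) (if e j then fv j else - fv j).

Definition alpha (e : signs) (j : nat) : R := ip (psi e j) (fv j).
Definition aa (j : nat) : R := bb j * bmax j.+1 * (2^-1 + logterm).
(* swap probability at step j+1 (depends only on e_0..e_{j-1}) *)
Definition pswap (e : signs) (j : nat) : R :=
  Num.min 1 (2^-1 * Num.max 0 (1 - alpha e j / aa j)).

(* law of the sign sequence produced by KH(delta) *)
Definition Pkh (e : signs) : R :=
  \prod_(j < m) (if e j then pswap e j else 1 - pswap e j).

Definition prob (E : {set signs}) : R := \sum_(e in E) Pkh e.

Definition subgaussian_on (phi : signs -> H) (nu : R) (E : {set signs}) : Prop :=
  forall g : H,
    \sum_(e in E) Pkh e * expR (ip g (phi e)) <= expR (nu ^+ 2 / 2 * ip g g).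

Definition nu (i : nat) : R := bmax i * Num.sqrt logterm / (2 * i%:R).

(* finitely supported (weighted) distributions on X and MMD_k *)
Definition dirac (y : X) : seq (R * X) := [:: (1, y)].
Definition Pin : seq (R * X) := [seq ((n_in%:R)^-1, x j) | j <- iota 0 n_in].
Definition expect (mu : seq (R * X)) (g : H) : R :=
  \sum_(p <- mu) p.1 * ip g (Phi p.2).
Definition mmd (mu mu' : seq (R * X)) : R :=
  sup [set r | exists g : H, ip g g <= 1 /\ r = `|expect mu g - expect mu' g|].

End KernelHalving.

From mathcomp Require Import all_boot all_order all_algebra.
From mathcomp Require Import classical_sets functions reals topology normedtype derive realfun.
From mathcomp.analysis Require Import sequences exp.
From mathcomp Require Import lra ring zify.
Unset Printing Implicit Defensive.
Import Order.TTheory GRing.Theory Num.Theory.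
Import numFieldNormedType.Exports.
Local Open Scope classical_set_scope.
Local Open Scope ring_scope.

(* Conditionally on the past and on [|alpha_i| <= a_i], the sign [eta_i] is a
   [+-1] variable of mean [- alpha_i / a_i], so Hoeffding's lemma gives
     E[exp <g, psi_i>] <= E[exp <g - (<g, f_i> / a_i) f_i, psi_(i-1)>] exp (<g, f_i>^2 / 2).
   On the good event E_i = {|alpha_j| <= a_j for all j < i}, iterating this and
   absorbing the shifts of [g] (this is what the choice of [a_i] allows) bounds the
   mgf of [psi_i] by [exp (vproxy i ||g||^2 / 2)], with
   [vproxy i = b_(max,i)^2 (1/2 + L)^2 / (2 L) <= b_(max,i)^2 L] as [L = log (2 n / delta) >= 5/4].
   The same bound at [g = +- t f_i] and Chernoff's inequality give
   [P (E_i, |alpha_i| > a_i) <= 2 exp (- L) = delta / n], and a union bound gives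
   [P (E_m) >= 1 - delta / 2].  The MMD statements hold because the MMD of two finitely
   supported measures is the RKHS distance of their mean embeddings. *)

Section Hoeffding.
Variable R : realType.

Lemma ler_is_derive_ge0 {f df : R -> R} {a b : R} :
  (forall x : R, is_derive x 1 f (df x)) -> (forall x, a <= x <= b -> 0 <= df x) ->
  a <= b -> f a <= f b.
Proof.
move=> fdf df_ge0 ab.
have cf : {within `[a, b], continuous f}.
  by apply: derivable_within_continuous => y _; case: (fdf y).
have [c] := MVT_segment ab (fun y _ => fdf y) cf.
rewrite in_itv /= => cab e.
by rewrite -subr_ge0 e mulr_ge0 ?df_ge0 // subr_ge0.
Qed.

Lemma is_derive_le_peak0 {f df : R -> R} :
  (forall x : R, is_derive x 1 f (df x)) ->
  (forall x, x <= 0 -> 0 <= df x) -> (forall x, 0 <= x -> df x <= 0) ->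
  forall c, f c <= f 0.
Proof.
move=> fdf dfl dfr c; case: (leP 0 c) => c0; last first.
  apply: (ler_is_derive_ge0 fdf) => [y /andP[_ y0]|]; [exact: dfl | exact: ltW].
suff : (- f) 0 <= (- f) c by rewrite !fctE lerN2.
apply: (ler_is_derive_ge0 (fun y => is_deriveN (fdf y))) => // y /andP[y0 _].
by rewrite oppr_ge0 dfr.
Qed.

Section TwoPoint.
Variable p : R.
Hypotheses (p_ge0 : 0 <= p) (p_le1 : p <= 1).

Let D (c : R) := p * expR (2 * c) + (1 - p).

Let D_gt0 (c : R) : 0 < D c.
Proof.
rewrite /D; case: (ltP p 1) => hp.
  by apply: ltr_wpDl; [rewrite mulr_ge0 // expR_ge0 | rewrite subr_gt0].
have -> : p = 1 by apply/eqP; rewrite eq_le p_le1 hp.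
by rewrite mul1r subrr addr0 expR_gt0.
Qed.

(* [N c = c / 2 - (p_c - p)] with [p_c = p expR (2 c) / D c] the exponentially
   tilted swap probability; [- K'] has the sign of [N]. *)
Let N (c : R) := c / 2 + p - p * expR (2 * c) * (D c)^-1.

(* [E exp (c (Z - E Z) - c^2 / 2)] for [Z = +-1] with [P (Z = 1) = p]. *)
Let K (c : R) := p * expR (2 * (1 - p) * c - c ^+ 2 / 2)
   + (1 - p) * expR (- (2 * p * c) - c ^+ 2 / 2).

Let is_derive_N (c : R) : is_derive c 1 N ((p * expR (2 * c) - (1 - p)) ^+ 2 / (2 * D c ^+ 2)).
Proof.
have Dc_neq0 : D c != 0 by rewrite gt_eqF.
have dDV : is_derive c 1 (fun y => (D y)^-1) (- (D c) ^- 2 *: (p * (expR (2 * c) * 2))).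
  by apply: is_deriveV => //; apply: is_derive_eq; rewrite /GRing.scale /=; ring.
rewrite /N; apply: is_derive_eq.
by rewrite /GRing.scale /=; rewrite /D in Dc_neq0 *; field.
Qed.

Let N_sign (c : R) : (0 <= c -> 0 <= N c) /\ (c <= 0 -> N c <= 0).
Proof.
have N0 : N 0 = 0.
  rewrite /N /D mulr0 expR0 mulr1 mul0r add0r.
  have -> : p + (1 - p) = 1 by ring.
  by rewrite invr1 mulr1 subrr.
have N_mono (a b : R) : a <= b -> N a <= N b.
  apply: (ler_is_derive_ge0 is_derive_N) => y _.
  by rewrite divr_ge0 ?sqr_ge0 // mulr_ge0 // sqr_ge0.
by split=> hc; rewrite -N0; apply: N_mono.
Qed.

Let is_derive_K (c : R) :
  is_derive c 1 K (- (2 * expR (- (2 * p * c) - c ^+ 2 / 2) * D c * N c)).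
Proof.
have Dc_neq0 : D c != 0 by rewrite gt_eqF.
rewrite /K; apply: is_derive_eq; rewrite /GRing.scale /=.
have -> : expR (2 * (1 - p) * c - c ^+ 2 / 2) =
    expR (- (2 * p * c) - c ^+ 2 / 2) * expR (2 * c).
  by rewrite -expRD; congr expR; ring.
by rewrite /N; rewrite /D in Dc_neq0 *; field.
Qed.

Let K_le1 (c : R) : K c <= 1.
Proof.
have -> : 1 = K 0 by rewrite /K !mulr0 expr0n /= mul0r oppr0 addr0 expR0; ring.
have DE_ge0 y : 0 <= 2 * expR (- (2 * p * y) - y ^+ 2 / 2) * D y.
  by rewrite mulr_ge0 ?(ltW (D_gt0 _)) // mulr_ge0 // expR_ge0.
apply: (is_derive_le_peak0 is_derive_K) => y hy.
  by rewrite oppr_ge0 mulr_ge0_le0 // (proj2 (N_sign y) hy).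
by rewrite oppr_le0 mulr_ge0 // (proj1 (N_sign y) hy).
Qed.

Lemma two_point_mgf_le (c : R) :
  p * expR c + (1 - p) * expR (- c) <= expR (c ^+ 2 / 2 + (2 * p - 1) * c).
Proof.
set C := c ^+ 2 / 2 + (2 * p - 1) * c.
have shift (q A : R) : q * expR (A - c ^+ 2 / 2) * expR C = q * expR (A + (2 * p - 1) * c).
  by rewrite -mulrA -expRD; congr (_ * expR _); rewrite /C; ring.
have eK : p * expR c + (1 - p) * expR (- c) = K c * expR C.
  by rewrite /K /= [RHS]mulrDl !shift; congr (_ * expR _ + _ * expR _); ring.
by rewrite eK -[X in _ <= X]mul1r ler_wpM2r ?expR_ge0 ?K_le1.
Qed.

End TwoPoint.

Lemma hoeffding_pm1 (r c : R) : -1 <= r <= 1 ->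
  (1 - r) / 2 * expR c + (1 - (1 - r) / 2) * expR (- c) <= expR (c ^+ 2 / 2 - r * c).
Proof.
move=> /andP[r_ge r_le].
have -> : c ^+ 2 / 2 - r * c = c ^+ 2 / 2 + (2 * ((1 - r) / 2) - 1) * c by field.
by apply: two_point_mgf_le; lra.
Qed.

Lemma chernoff_two_sided (t a y : R) : 0 <= t -> a <= `|y| ->
  1 <= expR (- (t * a)) * (expR (t * y) + expR (- (t * y))).
Proof.
move=> t_ge0 ay; rewrite mulrDr -!expRD.
have e_ge1 (z : R) : 0 <= z -> 1 <= expR z by move=> z0; apply: le_trans (expR_ge1Dx z); lra.
case: (lerP 0 y) => y0; move: ay; [rewrite ger0_norm // | rewrite ltr0_norm //] => ay.
  apply: (le_trans (e_ge1 (- (t * a) + t * y) _)); last by rewrite lerDl expR_ge0.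
  by rewrite addrC subr_ge0 ler_wpM2l.
apply: (le_trans (e_ge1 (- (t * a) + - (t * y)) _)); last by rewrite lerDr expR_ge0.
have -> : - (t * a) + - (t * y) = t * (- y - a) by ring.
by rewrite mulr_ge0 // subr_ge0.
Qed.

End Hoeffding.

Lemma variance_proxy_step (R : realFieldType) (b B B' L G c : R) :
  0 < L -> 0 <= b <= B -> 0 <= B' <= B -> (b = 0 -> c = 0) ->
  let v := (2^-1 + L) ^+ 2 / (2 * L) in
  let t := c / (b * B * (2^-1 + L)) in
  0 <= G - 2 * t * c + t ^+ 2 * b ^+ 2 ->
  B' ^+ 2 * v / 2 * (G - 2 * t * c + t ^+ 2 * b ^+ 2) + c ^+ 2 / 2 <= B ^+ 2 * v / 2 * G.
Proof.
move=> L_gt0 /andP[b_ge0 bB] /andP[B'_ge0 B'B] c0 v t G'_ge0.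
have h_gt0 : 0 < 2^-1 + L by lra.
have v_ge0 : 0 <= v by rewrite divr_ge0 ?sqr_ge0 // mulr_ge0 // ltW.
have BB' : B' ^+ 2 <= B ^+ 2 by rewrite ler_pXn2r // ?nnegrE // (le_trans B'_ge0 B'B).
apply: le_trans (_ : B ^+ 2 * v / 2 * (G - 2 * t * c + t ^+ 2 * b ^+ 2) + c ^+ 2 / 2 <= _).
  by rewrite lerD2r ler_wpM2r // ler_wpM2r //; [lra | rewrite ler_wpM2r].
have [b_eq0|b_neq0] := eqVneq b 0.
  by rewrite /t (c0 b_eq0) b_eq0 expr0n /= !(mul0r, mulr0, subr0, addr0).
have b_gt0 : 0 < b by rewrite lt0r b_neq0.
have B_gt0 : 0 < B by apply: lt_le_trans bB.
(* the gain [c^2 / 2] is paid for by the shift term [t^2 b^2 - 2 t c] of [G],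
   up to a nonpositive remainder *)
have -> : B ^+ 2 * v / 2 * (G - 2 * t * c + t ^+ 2 * b ^+ 2) + c ^+ 2 / 2 =
   B ^+ 2 * v / 2 * G - c ^+ 2 * (2^-1 + L) * (B - b) / (2 * L * b).
  rewrite /v /t; field.
  by rewrite b_neq0 !gt_eqF //; lra.
rewrite gerBl divr_ge0 //; last by rewrite !mulr_ge0 // ltW.
by rewrite mulr_ge0 ?subr_ge0 // mulr_ge0 ?sqr_ge0 // ltW.
Qed.

Lemma expR_five_fourths_le4 (R : realType) : expR (5 / 4 : R) <= 4.
Proof.
have -> : (5 / 4 : R) = 8%:R * (5 / 32) by field.
rewrite expRM_natl -[8%N]/(2 * (2 * 2))%N !exprM.
set y := expR (5 / 32 : R).
have y_ge0 : 0 <= y by apply: expR_ge0.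
have yV : y * expR (- (5 / 32)) = 1 by rewrite /y -expRD subrr expR0.
have yV_ge : 27 / 32 <= expR (- (5 / 32) : R) by apply: le_trans (expR_ge1Dx _); lra.
have y_le : y <= 32 / 27 by have := expR_gt0 (- (5 / 32) : R); nra.
have y2_le : y ^+ 2 <= 141 / 100 by nra.
have y4_le : (y ^+ 2) ^+ 2 <= 2 by have := sqr_ge0 y; nra.
by have := sqr_ge0 (y ^+ 2); nra.
Qed.

Section InnerProductSpace.
Variables (R : realType) (H : lmodType R) (ip : H -> H -> R).
Hypothesis ip_inner : inner_product ip.

Lemma ipC u v : ip u v = ip v u.
Proof. by case: ip_inner. Qed.

Lemma ip_ge0 u : 0 <= ip u u.
Proof. by case: ip_inner. Qed.

Lemma ip_eq0 {u} : ip u u = 0 -> u = 0.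
Proof. by case: ip_inner => _ _ _; apply. Qed.

Lemma ipZDl a u v w : ip (a *: u + v) w = a * ip u w + ip v w.
Proof. by case: ip_inner. Qed.

Lemma ip0l w : ip 0 w = 0.
Proof.
have := ipZDl 1 0 0 w; rewrite scale1r addr0 mul1r => h.
by apply: (addrI (ip 0 w)); rewrite addr0 -h.
Qed.

Lemma ipDl u v w : ip (u + v) w = ip u w + ip v w.
Proof. by have := ipZDl 1 u v w; rewrite scale1r mul1r. Qed.

Lemma ipZl a u w : ip (a *: u) w = a * ip u w.
Proof. by have := ipZDl a u 0 w; rewrite addr0 ip0l addr0. Qed.

Lemma ipNl u w : ip (- u) w = - ip u w.
Proof. by rewrite -scaleN1r ipZl mulN1r. Qed.

Lemma ipBl u v w : ip (u - v) w = ip u w - ip v w.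
Proof. by rewrite ipDl ipNl. Qed.

Lemma ip0r w : ip w 0 = 0.
Proof. by rewrite ipC ip0l. Qed.

Lemma ipDr u v w : ip w (u + v) = ip w u + ip w v.
Proof. by rewrite ipC ipDl !(ipC w). Qed.

Lemma ipZr a u w : ip w (a *: u) = a * ip w u.
Proof. by rewrite ipC ipZl ipC. Qed.

Lemma ipNr u w : ip w (- u) = - ip w u.
Proof. by rewrite ipC ipNl ipC. Qed.

Lemma ipBr u v w : ip w (u - v) = ip w u - ip w v.
Proof. by rewrite ipDr ipNr. Qed.

Lemma ip_sumr (I : Type) (r : seq I) (P : pred I) (F : I -> H) w :
  ip w (\sum_(i <- r | P i) F i) = \sum_(i <- r | P i) ip w (F i).
Proof. by apply: (big_morph (ip w)); [move=> u v; rewrite ipDr | rewrite ip0r]. Qed.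

Lemma ip_subZ_sqr g f t :
  ip (g - t *: f) (g - t *: f) = ip g g - 2 * t * ip g f + t ^+ 2 * ip f f.
Proof. by rewrite !(ipBl, ipBr, ipZl, ipZr) (ipC f g); ring. Qed.

Definition ipnorm u := Num.sqrt (ip u u).

Lemma ipnorm_ge0 u : 0 <= ipnorm u.
Proof. exact: sqrtr_ge0. Qed.

Lemma sqr_ipnorm u : ipnorm u ^+ 2 = ip u u.
Proof. by rewrite sqr_sqrtr // ip_ge0. Qed.

Lemma ipnorm_eq0 {u} : ipnorm u = 0 -> u = 0.
Proof.
move=> /eqP; rewrite sqrtr_eq0 => h; apply: ip_eq0.
by apply/eqP; rewrite eq_le h ip_ge0.
Qed.

Lemma ipnormN u : ipnorm (- u) = ipnorm u.
Proof. by rewrite /ipnorm ipNl ipNr opprK. Qed.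

Lemma cauchy_schwarz u v : ip u v ^+ 2 <= ip u u * ip v v.
Proof.
have [v_eq0|v_neq0] := eqVneq (ip v v) 0.
  by rewrite (ip_eq0 v_eq0) !ip0r expr0n /= mulr0.
have v_gt0 : 0 < ip v v by rewrite lt0r v_neq0 ip_ge0.
set a := ip u v; set b := ip v v.
have := ip_ge0 (u - (a / b) *: v); rewrite ip_subZ_sqr -/a -/b.
have -> : ip u u - 2 * (a / b) * a + (a / b) ^+ 2 * b = ip u u - a ^+ 2 / b.
  by field; rewrite gt_eqF.
by rewrite subr_ge0 ler_pdivrMr // mulrC.
Qed.

Lemma ler_abs_ip u v : `|ip u v| <= ipnorm u * ipnorm v.
Proof.
rewrite /ipnorm -sqrtrM ?ip_ge0 // -sqrtr_sqr ler_sqrt ?mulr_ge0 ?ip_ge0 //.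
exact: cauchy_schwarz.
Qed.

Lemma ipnormD_le u v : ipnorm (u + v) <= ipnorm u + ipnorm v.
Proof.
rewrite {1}/ipnorm -(ger0_norm (addr_ge0 (ipnorm_ge0 u) (ipnorm_ge0 v))) -sqrtr_sqr.
rewrite ler_sqrt ?sqr_ge0 // !(ipDl, ipDr) sqrrD !sqr_ipnorm (ipC v u).
have := ler_abs_ip u v; have := ler_norm (ip u v); lra.
Qed.

Lemma ipnormB_le u v : ipnorm (u - v) <= ipnorm u + ipnorm v.
Proof. by apply: le_trans (ipnormD_le _ _) _; rewrite ipnormN. Qed.

Lemma ipnormB_le_via u v w : ipnorm (u - v) <= ipnorm (u - w) + ipnorm (v - w).
Proof.
have -> : u - v = (u - w) - (v - w) by rewrite opprB addrA subrK.
exact: ipnormB_le.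
Qed.

Section MMD.
Variables (X : Type) (Phi : X -> H).

Lemma mmd_ipnorm {mu mu' : seq (R * X)} {f} :
  (forall g, expect ip Phi mu g - expect ip Phi mu' g = ip g f) ->
  mmd ip Phi mu mu' = ipnorm f.
Proof.
move=> mu_f; rewrite /mmd; set E := [set r | _].
have E_ub : ubound E (ipnorm f).
  move=> r [g [g_le1 ->]]; rewrite mu_f.
  apply: le_trans (ler_abs_ip g f) _.
  by rewrite ler_piMl ?ipnorm_ge0 // /ipnorm -sqrtr1 ler_sqrt.
have E0 : E `|expect ip Phi mu 0 - expect ip Phi mu' 0| by exists 0; rewrite ip0l.
apply/eqP; rewrite eq_le ge_sup //=; last by eexists; exact: E0.
have [f_eq0|f_neq0] := eqVneq (ipnorm f) 0.
  by rewrite f_eq0; apply: le_trans (ub_le_sup _ E0); [exact: normr_ge0 | exists (ipnorm f)].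
have f_gt0 : 0 < ipnorm f by rewrite lt0r f_neq0 ipnorm_ge0.
apply: ub_le_sup; first by exists (ipnorm f).
exists ((ipnorm f)^-1 *: f); split.
  by rewrite ipZl ipZr -sqr_ipnorm mulrA -expr2 exprVn mulVf // expf_neq0.
by rewrite mu_f ipZl -sqr_ipnorm expr2 mulrA mulVf // mul1r ger0_norm // ipnorm_ge0.
Qed.

Lemma expect_dirac y g : expect ip Phi (dirac R y) g = ip g (Phi y).
Proof. by rewrite /expect /dirac big_cons big_nil /= mul1r addr0. Qed.

Lemma mmd_dirac y z : mmd ip Phi (dirac R y) (dirac R z) = ipnorm (Phi y - Phi z).
Proof. by apply: mmd_ipnorm => g; rewrite !expect_dirac ipBr. Qed.

Definition mean_embedding (m : nat) (x : nat -> X) : H :=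
  ((n_in m)%:R)^-1 *: \sum_(j <- iota 0 (n_in m)) Phi (x j).

Lemma mmd_dirac_Pin m x y :
  mmd ip Phi (dirac R y) (Pin R m x) = ipnorm (Phi y - mean_embedding m x).
Proof.
apply: mmd_ipnorm => g; rewrite expect_dirac ipBr; congr (_ - _).
by rewrite /expect /Pin big_map /mean_embedding ipZr ip_sumr mulr_sumr.
Qed.

Section KernelHalving.
Variables (k : X -> X -> R) (m : nat) (x : nat -> X) (delta : R).
Hypothesis k_ip : forall y z, k y z = ip (Phi y) (Phi z).
Hypothesis delta01 : 0 < delta < 1.
Hypothesis m_gt0 : (0 < m)%N.

Local Notation signs := (signs m).
Local Notation f_ := (fv Phi x).
Local Notation b_ := (bb k x).
Local Notation B_ := (bmax k x).
Local Notation a_ := (aa k m x delta).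
Local Notation L := (logterm m delta).
Local Notation psi_ := (@psi R X H Phi m x).
Local Notation alpha_ := (@alpha R X H ip Phi m x).
Local Notation pswap_ := (@pswap R X H ip Phi k m x delta).
Local Notation Pkh_ := (@Pkh R X H ip Phi k m x delta).
Local Notation prob_ := (prob ip Phi k x delta).

Lemma bb_ipnorm j : b_ j = ipnorm (f_ j).
Proof.
rewrite /bb /ipnorm /fv; congr Num.sqrt.
by rewrite !k_ip !(ipBl, ipBr) (ipC (Phi (x (2 * j).+1))); ring.
Qed.

Lemma bb_ge0 j : 0 <= b_ j.
Proof. exact: sqrtr_ge0. Qed.

Lemma bb_eq0 {j} : b_ j = 0 -> f_ j = 0.
Proof. by rewrite bb_ipnorm; apply: ipnorm_eq0. Qed.

Lemma bmax_ge0 i : 0 <= B_ i.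
Proof.
apply: (big_ind (fun v => 0 <= v)) => // [u v u0 v0|j _]; last exact: bb_ge0.
by rewrite le_max u0.
Qed.

Lemma bb_le_bmax j : b_ j <= B_ j.+1.
Proof. exact: (le_bigmax 0 (fun i : 'I_j.+1 => b_ i) ord_max). Qed.

Lemma bmax_mono : {homo B_ : i j / (i <= j)%N >-> i <= j}.
Proof. by move=> i j ij; apply: (@le_bigmax_ord _ _ 0 i j xpredT b_ ij). Qed.

Lemma expR_logterm : expR L = 4 * m%:R / delta.
Proof.
have [delta_gt0 _] := andP delta01.
rewrite /logterm /n_in lnK; first by rewrite natrM mulrA -natrM.
by rewrite posrE divr_gt0 // mulr_gt0 // ltr0n muln_gt0 m_gt0.
Qed.

Lemma expR_Nlogterm : expR (- L) = delta / (4 * m%:R).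
Proof.
have [delta_gt0 _] := andP delta01.
have m_neq0 : (m%:R : R) != 0 by rewrite pnatr_eq0 -lt0n.
by rewrite expRN expR_logterm; field; rewrite m_neq0 gt_eqF.
Qed.

Lemma logterm_ge : 5 / 4 <= L.
Proof.
have [delta_gt0 delta_lt1] := andP delta01.
rewrite -ler_expR expR_logterm; apply: le_trans (expR_five_fourths_le4 R) _.
rewrite ler_pdivlMr //.
have : (1 : R) <= m%:R by rewrite ler1n.
lra.
Qed.

Lemma logterm_gt0 : 0 < L.
Proof. by apply: lt_le_trans logterm_ge; lra. Qed.

Definition vconst : R := (2^-1 + L) ^+ 2 / (2 * L).
Definition vproxy (i : nat) : R := B_ i ^+ 2 * vconst.

Lemma vconst_ge0 : 0 <= vconst.
Proof. by rewrite divr_ge0 ?sqr_ge0 // mulr_ge0 // ltW // logterm_gt0. Qed.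

Lemma vconst_le_logterm : vconst <= L.
Proof.
have L_ge := logterm_ge.
have : 0 <= (L - 5 / 4) * (L + 1 / 4) by apply: mulr_ge0; lra.
by rewrite /vconst ler_pdivrMr ?mulr_gt0 ?logterm_gt0 //; nra.
Qed.

Lemma vproxy_ge0 i : 0 <= vproxy i.
Proof. by rewrite mulr_ge0 ?sqr_ge0 ?vconst_ge0. Qed.

Lemma vproxy_mono : {homo vproxy : i j / (i <= j)%N >-> i <= j}.
Proof.
move=> i j ij; rewrite ler_wpM2r ?vconst_ge0 // ler_pXn2r ?nnegrE ?bmax_ge0 //.
exact: bmax_mono.
Qed.

Lemma aa_ge0 j : 0 <= a_ j.
Proof. by rewrite !mulr_ge0 ?bb_ge0 ?bmax_ge0 //; have := logterm_gt0; lra. Qed.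

Lemma pswap_ge0_le1 e j : 0 <= pswap_ e j <= 1.
Proof.
rewrite /pswap le_min ler01 /= ge_min lexx /= andbT.
by rewrite mulr_ge0 ?invr_ge0 ?ler0n // le_max lexx.
Qed.

Lemma pswap_small_alpha {e j} : `|alpha_ e j| <= a_ j ->
  -1 <= alpha_ e j / a_ j <= 1 /\ pswap_ e j = (1 - alpha_ e j / a_ j) / 2.
Proof.
move=> alpha_le.
have r_pm1 : -1 <= alpha_ e j / a_ j <= 1.
  have [a_eq0|a_neq0] := eqVneq (a_ j) 0; first by rewrite a_eq0 invr0 mulr0; lra.
  have a_gt0 : 0 < a_ j by rewrite lt0r a_neq0 aa_ge0.
  by rewrite -ler_norml normrM normfV (ger0_norm (aa_ge0 j)) ler_pdivrMr // mul1r.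
split=> //; rewrite /pswap (@max_r _ _ 0); last lra.
by rewrite min_r; [rewrite mulrC | lra].
Qed.

Definition sign_prob (e : signs) (j : 'I_m) : R :=
  if e j then pswap_ e j else 1 - pswap_ e j.

(* Law of the first [i] signs of KH, the remaining ones being fair coins. *)
Definition prefix_law (i : nat) (e : signs) : R :=
  \prod_(j < m) (if (j < i)%N then sign_prob e j else 2^-1).

Definition eq_prefix (i : nat) (e e' : signs) :=
  forall j : 'I_m, (j < i)%N -> e j = e' j.
Definition prefix_determined (i : nat) (F : signs -> R) :=
  forall e e', eq_prefix i e e' -> F e = F e'.

Lemma eq_prefix_le {i j e e'} : (i <= j)%N -> eq_prefix j e e' -> eq_prefix i e e'.
Proof. by move=> ij ee' l li; apply: ee'; apply: leq_trans ij. Qed.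

Lemma psi_eq_prefix {i e e'} : eq_prefix i e e' -> psi_ e i = psi_ e' i.
Proof. by move=> ee'; apply: eq_bigr => j ji; rewrite ee'. Qed.

Lemma alpha_eq_prefix {i e e'} : eq_prefix i e e' -> alpha_ e i = alpha_ e' i.
Proof. by move=> ee'; rewrite /alpha (psi_eq_prefix ee'). Qed.

Lemma pswap_eq_prefix {i e e'} : eq_prefix i e e' -> pswap_ e i = pswap_ e' i.
Proof. by move=> ee'; rewrite /pswap (alpha_eq_prefix ee'). Qed.

Lemma sign_prob_ge0 e j : 0 <= sign_prob e j.
Proof.
by have /andP[] := pswap_ge0_le1 e j; rewrite /sign_prob; case: (e j); rewrite ?subr_ge0.
Qed.

Lemma sign_prob_eq_prefix {j : 'I_m} {e e'} :
  eq_prefix j.+1 e e' -> sign_prob e j = sign_prob e' j.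
Proof.
move=> ee'; rewrite /sign_prob (ee' j (ltnSn _)).
by rewrite (pswap_eq_prefix (eq_prefix_le (leqnSn j) ee')).
Qed.

Lemma prefix_law_ge0 i e : 0 <= prefix_law i e.
Proof. by apply: prodr_ge0 => j _; case: ifP; rewrite ?sign_prob_ge0 ?invr_ge0. Qed.

Lemma prefix_law_m e : prefix_law m e = Pkh_ e.
Proof. by apply: eq_bigr => j _; rewrite ltn_ord. Qed.

Lemma prefix_law_eq_prefix {i e e'} : eq_prefix i e e' -> prefix_law i e = prefix_law i e'.
Proof.
move=> ee'; apply: eq_bigr => j _; case: ifP => // ji.
by apply: sign_prob_eq_prefix; apply: eq_prefix_le ee'.
Qed.

Definition set_sign (e : signs) (i : nat) (b : bool) : signs :=
  [ffun j : 'I_m => if j == i :> nat then b else e j].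
Definition flip_sign (e : signs) (i : nat) : signs :=
  [ffun j : 'I_m => if j == i :> nat then ~~ e j else e j].

Lemma eq_prefix_set_sign i e b : eq_prefix i e (set_sign e i b).
Proof. by move=> j ji; rewrite ffunE (ltn_eqF ji). Qed.

Lemma eq_prefix_flip_sign i e : eq_prefix i e (flip_sign e i).
Proof. by move=> j ji; rewrite ffunE (ltn_eqF ji). Qed.

Lemma flip_signK i : involutive (flip_sign ^~ i).
Proof. by move=> e; apply/ffunP => j; rewrite !ffunE; case: eqP; rewrite ?negbK. Qed.

Lemma flip_sign_at (e : signs) (j : 'I_m) : flip_sign e j j = ~~ e j.
Proof. by rewrite ffunE eqxx. Qed.

Lemma set_sign_id {e : signs} {j : 'I_m} {b} : e j = b -> set_sign e j b = e.
Proof.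
move=> ej; apply/ffunP => l; rewrite ffunE.
by case: eqP => // /val_inj ->.
Qed.

Lemma set_sign_flip {e : signs} {j : 'I_m} {b} : e j = ~~ b -> set_sign e j b = flip_sign e j.
Proof.
move=> ej; apply/ffunP => l; rewrite !ffunE.
by case: eqP => // /val_inj ->; rewrite ej negbK.
Qed.

Lemma prefix_lawS {i} (hi : (i < m)%N) e :
  prefix_law i.+1 e = 2 * sign_prob e (Ordinal hi) * prefix_law i e.
Proof.
rewrite /prefix_law (bigD1 (Ordinal hi)) //= (bigD1 (Ordinal hi) (P := predT)) //= ltnSn ltnn.
have -> : \prod_(j < m | j != Ordinal hi) (if (j < i.+1)%N then sign_prob e j else 2^-1) =
          \prod_(j < m | j != Ordinal hi) (if (j < i)%N then sign_prob e j else 2^-1).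
  apply: eq_bigr => j ji; rewrite ltnS leq_eqVlt.
  suff -> : (nat_of_ord j == i) = false by [].
  by apply/negbTE; apply: contra ji => /eqP ji; apply/eqP/val_inj.
by field.
Qed.

Lemma sum_prefix_lawS i F : (i < m)%N ->
  \sum_e prefix_law i.+1 e * F e =
  \sum_e prefix_law i e *
    (pswap_ e i * F (set_sign e i true) + (1 - pswap_ e i) * F (set_sign e i false)).
Proof.
move=> hi; set io := Ordinal hi.
under eq_bigr do rewrite (prefix_lawS hi).
(* pair [e] with [flip_sign e i], which has the same law up to step [i] *)
have -> : \sum_e 2 * sign_prob e io * prefix_law i e * F e =
    \sum_e (sign_prob e io * prefix_law i e * F e +
            sign_prob (flip_sign e i) io * prefix_law i (flip_sign e i) * F (flip_sign e i)).
  have flip_sum : \sum_e sign_prob (flip_sign e i) io * prefix_law i (flip_sign e i) *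
                         F (flip_sign e i) = \sum_e sign_prob e io * prefix_law i e * F e.
    by rewrite [RHS](reindex_inj (can_inj (flip_signK i))).
  by rewrite big_split /= flip_sum -big_split /=; apply: eq_bigr => e _; ring.
apply: eq_bigr => e _.
have ee' := eq_prefix_flip_sign i e.
have flip_io : flip_sign e i io = ~~ e io := flip_sign_at e io.
rewrite -(prefix_law_eq_prefix ee') /sign_prob /= flip_io -(pswap_eq_prefix ee').
case ei : (e io) => /=.
  by rewrite (set_sign_id ei) (set_sign_flip (b := false) ei); ring.
by rewrite (set_sign_id ei) (set_sign_flip (b := true) ei); ring.
Qed.

Lemma sum_prefix_law_determined i j F : prefix_determined i F -> (i <= j <= m)%N ->
  \sum_e prefix_law j e * F e = \sum_e prefix_law i e * F e.
Proof.
move=> F_i /andP[+ jm]; elim: j jm => [_|j IH jm]; first by rewrite leqn0 => /eqP->.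
rewrite leq_eqVlt => /orP[/eqP-> // | ]; rewrite ltnS => ij.
rewrite sum_prefix_lawS // -IH ?(ltnW jm) //; apply: eq_bigr => e _.
have F_set b : F (set_sign e j b) = F e.
  by apply/esym/F_i/(eq_prefix_le ij)/eq_prefix_set_sign.
by rewrite !F_set; ring.
Qed.

Lemma sum_prefix_law {i} : (i <= m)%N -> \sum_e prefix_law i e = 1.
Proof.
move=> im.
have sum1 j : \sum_e prefix_law j e = \sum_e prefix_law j e * 1.
  by apply: eq_bigr => e _; rewrite mulr1.
rewrite sum1 (@sum_prefix_law_determined 0 i) ?im // -sum1.
rewrite (eq_bigr (fun=> (2^-1) ^+ m)) => [|e _]; last first.
  by rewrite /prefix_law (eq_bigr (fun=> 2^-1)) ?prodr_const ?card_ord.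
rewrite sumr_const card_ffun card_bool card_ord -[_ *+ _]mulr_natr natrX -exprMn.
by rewrite mulVf ?expr1n // pnatr_eq0.
Qed.

Lemma sum_Pkh : \sum_e Pkh_ e = 1.
Proof. by rewrite -(sum_prefix_law (leqnn m)); apply: eq_bigr => e _; rewrite prefix_law_m. Qed.

Lemma Pkh_ge0 e : 0 <= Pkh_ e.
Proof. by rewrite -prefix_law_m prefix_law_ge0. Qed.

Definition good (i : nat) (e : signs) : bool :=
  [forall j : 'I_m, (j < i)%N ==> (`|alpha_ e j| <= a_ j)].

Definition bad_step (i : nat) (e : signs) : bool := good i e && (a_ i < `|alpha_ e i|).

Lemma good_eq_prefix {i e e'} : eq_prefix i e e' -> good i e = good i e'.
Proof.
move=> ee'; apply: eq_forallb => j; case: (ltnP j i) => //= ji.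
by rewrite (alpha_eq_prefix (eq_prefix_le (ltnW ji) ee')).
Qed.

Lemma good0 e : good 0 e.
Proof. by apply/forallP => j; rewrite ltn0. Qed.

Lemma goodS i e : (i < m)%N -> good i.+1 e = good i e && (`|alpha_ e i| <= a_ i).
Proof.
move=> hi; apply/forallP/andP => [good_e | [/forallP good_e alpha_le] j].
  split; last exact: (implyP (good_e (Ordinal hi)) (ltnSn i)).
  by apply/forallP => j; apply/implyP => ji; apply: (implyP (good_e j)); apply: ltnW.
apply/implyP; rewrite ltnS leq_eqVlt => /orP[/eqP-> // | ji].
exact: (implyP (good_e j) ji).
Qed.

Lemma good_le {i j e} : (i <= j)%N -> good j e -> good i e.
Proof.
move=> ij /forallP good_e; apply/forallP => l; apply/implyP => li.
by apply: (implyP (good_e l)); apply: leq_trans li ij.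
Qed.

Lemma psiS (e : signs) {i} (hi : (i < m)%N) :
  psi_ e i.+1 = psi_ e i + (if e (Ordinal hi) then f_ i else - f_ i).
Proof.
rewrite /psi (bigD1 (Ordinal hi)) //= addrC; congr (_ + _).
apply: eq_bigl => j /=; rewrite ltnS leq_eqVlt.
case: (eqVneq j (Ordinal hi)) => [->|ji] /=; first by rewrite eqxx ltnn.
suff -> : (nat_of_ord j == i) = false by rewrite andbT.
by apply/negbTE; apply: contra ji => /eqP ji; apply/eqP/val_inj.
Qed.

Lemma good_mgf_set_sign i e b g (hi : (i < m)%N) :
  (good i.+1 (set_sign e i b))%:R * expR (ip g (psi_ (set_sign e i b) i.+1)) =
  (good i e && (`|alpha_ e i| <= a_ i))%:R *
     expR (ip g (psi_ e i) + (if b then ip g (f_ i) else - ip g (f_ i))).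
Proof.
have ee' := eq_prefix_set_sign i e b.
rewrite goodS // -(good_eq_prefix ee') -(alpha_eq_prefix ee') (psiS _ hi).
by rewrite -(psi_eq_prefix ee') ipDr ffunE eqxx; clear ee'; case: b; rewrite ?ipNr.
Qed.

Lemma good_mgf_step i e g (hi : (i < m)%N) :
  pswap_ e i * ((good i.+1 (set_sign e i true))%:R *
                 expR (ip g (psi_ (set_sign e i true) i.+1))) +
  (1 - pswap_ e i) * ((good i.+1 (set_sign e i false))%:R *
                 expR (ip g (psi_ (set_sign e i false) i.+1)))
  <= (good i e)%:R * expR (ip (g - (ip g (f_ i) / a_ i) *: f_ i) (psi_ e i))
     * expR (ip g (f_ i) ^+ 2 / 2).
Proof.
rewrite !good_mgf_set_sign //=; set c := ip g (f_ i); set r := alpha_ e i / a_ i.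
case: (boolP (good i e && (`|alpha_ e i| <= a_ i))) => [/andP[-> alpha_le]|_] /=; last first.
  by rewrite !mul0r !mulr0 addr0 mulr_ge0 ?mulr_ge0 ?ler0n ?expR_ge0.
have [r_pm1 ->] := pswap_small_alpha alpha_le.
rewrite !mul1r -expRD -/r; set Y := ip g (psi_ e i).
have -> : ip (g - (c / a_ i) *: f_ i) (psi_ e i) + c ^+ 2 / 2 = Y + (c ^+ 2 / 2 - r * c).
  by rewrite ipBl ipZl -/Y /r /alpha (ipC (f_ i)); ring.
have -> : (1 - r) / 2 * expR (Y + c) + (1 - (1 - r) / 2) * expR (Y - c) =
          expR Y * ((1 - r) / 2 * expR c + (1 - (1 - r) / 2) * expR (- c)).
  by rewrite !expRD; ring.
by rewrite expRD ler_wpM2l ?expR_ge0 // hoeffding_pm1.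
Qed.

Lemma good_mgf_le i g : (i <= m)%N ->
  \sum_e prefix_law i e * ((good i e)%:R * expR (ip g (psi_ e i))) <=
  expR (vproxy i / 2 * ip g g).
Proof.
elim: i g => [g _|i IH g hi].
  rewrite /vproxy /bmax big_ord0 expr0n /= !mul0r expR0 -[leRHS](sum_prefix_law (leq0n m)).
  apply: ler_sum => e _.
  have -> : psi_ e 0 = 0 by rewrite /psi big_pred0 // => j; rewrite ltn0.
  by rewrite good0 ip0r expR0 !mulr1.
rewrite sum_prefix_lawS //; set c := ip g (f_ i); set g' := g - (c / a_ i) *: f_ i.
apply: le_trans (_ : \sum_e prefix_law i e * ((good i e)%:R * expR (ip g' (psi_ e i)))
                       * expR (c ^+ 2 / 2) <= _).
  apply: ler_sum => e _; rewrite -mulrA ler_wpM2l ?prefix_law_ge0 //.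
  exact: good_mgf_step.
rewrite -mulr_suml; apply: le_trans (ler_wpM2r (expR_ge0 _) (IH g' (ltnW hi))) _.
rewrite -expRD ler_expR.
have ip_g' : ip g' g' = ip g g - 2 * (c / a_ i) * c + (c / a_ i) ^+ 2 * b_ i ^+ 2.
  by rewrite /g' ip_subZ_sqr -/c bb_ipnorm sqr_ipnorm.
rewrite ip_g' /vproxy /vconst.
apply: variance_proxy_step; rewrite ?logterm_gt0 ?bb_ge0 ?bb_le_bmax ?bmax_ge0 ?bmax_mono //.
- by move=> /bb_eq0 f_eq0; rewrite /c f_eq0 ip0r.
- by rewrite -ip_g' ip_ge0.
Qed.

Lemma bad_step_le_mgf i e t : 0 <= t ->
  (bad_step i e)%:R <=
  expR (- (t * a_ i)) * ((good i e)%:R * expR (ip (t *: f_ i) (psi_ e i)) +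
                         (good i e)%:R * expR (ip ((- t) *: f_ i) (psi_ e i))).
Proof.
move=> t_ge0; rewrite /bad_step.
have ip_scaled (u : R) : ip (u *: f_ i) (psi_ e i) = u * alpha_ e i by rewrite ipZl ipC.
rewrite !ip_scaled mulNr.
case: (good i e); rewrite /= ?mul0r ?addr0 ?mulr0 //.
case: ltrP => [alpha_gt|_] /=; rewrite ?mulr1n ?mulr0n ?mul1r.
  exact: chernoff_two_sided (ltW alpha_gt).
by rewrite mulr_ge0 ?addr_ge0 ?expR_ge0.
Qed.

Lemma prob_bad_step i : (i < m)%N ->
  \sum_e Pkh_ e * (bad_step i e)%:R <= 2 * expR (- L).
Proof.
move=> hi; under eq_bigr do rewrite -prefix_law_m.
rewrite (@sum_prefix_law_determined i m); last 2 first.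
- by move=> e e' ee'; rewrite /bad_step (good_eq_prefix ee') (alpha_eq_prefix ee').
- by rewrite (ltnW hi) leqnn.
have [b_eq0|b_neq0] := eqVneq (b_ i) 0.
  rewrite big1 ?mulr_ge0 ?expR_ge0 // => e _.
  by rewrite /bad_step /alpha (bb_eq0 b_eq0) ip0r /aa b_eq0 !mul0r normr0 ltxx andbF mulr0.
have b_gt0 : 0 < b_ i by rewrite lt0r b_neq0 bb_ge0.
have B_gt0 : 0 < B_ i.+1 by apply: lt_le_trans (bb_le_bmax i).
have L_gt0 := logterm_gt0.
set t := a_ i / (vproxy i.+1 * b_ i ^+ 2).
have t_ge0 : 0 <= t by rewrite divr_ge0 ?aa_ge0 // mulr_ge0 ?vproxy_ge0 ?sqr_ge0.
have chernoff_opt : - (t * a_ i) + vproxy i.+1 / 2 * (t ^+ 2 * b_ i ^+ 2) = - L.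
  rewrite /t /vproxy /vconst /aa; field.
  by rewrite !gt_eqF //; lra.
have mgf_pm_t (u : R) : u ^+ 2 = t ^+ 2 ->
    \sum_e prefix_law i e * ((good i e)%:R * expR (ip (u *: f_ i) (psi_ e i))) <=
    expR (vproxy i.+1 / 2 * (t ^+ 2 * b_ i ^+ 2)).
  move=> ut; apply: le_trans (good_mgf_le i (u *: f_ i) (ltnW hi)) _.
  rewrite ler_expR ipZl ipZr mulrA -expr2 ut -sqr_ipnorm -bb_ipnorm.
  apply: ler_wpM2r; first by rewrite mulr_ge0 ?sqr_ge0.
  by apply: ler_wpM2r; [rewrite invr_ge0 | apply: vproxy_mono].
apply: le_trans (_ : \sum_e prefix_law i e * (expR (- (t * a_ i)) *
     ((good i e)%:R * expR (ip (t *: f_ i) (psi_ e i)) +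
      (good i e)%:R * expR (ip ((- t) *: f_ i) (psi_ e i)))) <= _).
  by apply: ler_sum => e _; apply: ler_wpM2l; rewrite ?prefix_law_ge0 ?bad_step_le_mgf.
under eq_bigr do rewrite mulrCA mulrDr.
rewrite -mulr_sumr big_split /=.
apply: le_trans (ler_wpM2l (expR_ge0 _) (lerD (mgf_pm_t t _) (mgf_pm_t (- t) _))) _.
- by [].
- exact: sqrrN.
by rewrite mulrDr -expRD chernoff_opt; lra.
Qed.

Lemma good_complement n e : (n <= m)%N ->
  1 - (good n e)%:R = \sum_(i < n) (bad_step i e)%:R :> R.
Proof.
elim: n => [_|n IH n_lt]; first by rewrite good0 big_ord0 subrr.
rewrite big_ord_recr /= -IH ?(ltnW n_lt) // /bad_step (goodS n e n_lt) ltNge.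
by case: (good n e); case: (`|alpha_ e n| <= a_ n); rewrite /= ?mulr1n ?mulr0n; lra.
Qed.

Lemma prob_good : 1 - delta / 2 <= prob_ [set e | good m e].
Proof.
have prob_sum : prob_ [set e | good m e] = \sum_e Pkh_ e * (good m e)%:R.
  rewrite /prob big_mkcond /=; apply: eq_bigr => e _; rewrite inE.
  by case: (good m e); rewrite ?mulr1 ?mulr0.
have union : 1 - prob_ [set e | good m e] =
    \sum_(i < m) \sum_e Pkh_ e * (bad_step i e)%:R.
  rewrite prob_sum -{1}sum_Pkh -sumrB exchange_big /=; apply: eq_bigr => e _.
  by rewrite -mulr_sumr -good_complement // mulrBr mulr1.
have : 1 - prob_ [set e | good m e] <= \sum_(i < m) 2 * expR (- L).
  by rewrite union; apply: ler_sum => i _; apply: prob_bad_step.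
have m_neq0 : (m%:R : R) != 0 by rewrite pnatr_eq0 -lt0n.
have -> : \sum_(i < m) 2 * expR (- L) = delta / 2.
  by rewrite sumr_const card_ord expR_Nlogterm -mulr_natr; field.
lra.
Qed.

Lemma subgaussian_good i : (i <= m)%N ->
  subgaussian_on ip Phi k x delta (fun e => (2 * i%:R)^-1 *: psi Phi x e i)
    (nu k m x delta i) [set e | good m e].
Proof.
move=> im g; set s := (2 * i%:R)^-1.
apply: le_trans (_ : \sum_e Pkh_ e * ((good i e)%:R * expR (ip (s *: g) (psi_ e i))) <= _).
  rewrite big_mkcond /=; apply: ler_sum => e _; rewrite inE ipZr ipZl.
  case: (boolP (good m e)) => [/(good_le im) -> | _]; first by rewrite mul1r.
  by rewrite mulr_ge0 ?Pkh_ge0 // mulr_ge0 ?expR_ge0.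
under eq_bigr do rewrite -prefix_law_m.
rewrite (@sum_prefix_law_determined i m); last 2 first.
- by move=> e e' ee'; rewrite (good_eq_prefix ee') (psi_eq_prefix ee').
- by rewrite im leqnn.
apply: le_trans (good_mgf_le i (s *: g) im) _.
rewrite ler_expR ipZl ipZr.
have nu2 : nu k m x delta i ^+ 2 = B_ i ^+ 2 * L * s ^+ 2.
  by rewrite /nu !exprMn sqr_sqrtr ?exprVn ?(ltW logterm_gt0) //; ring.
have -> : vproxy i / 2 * (s * (s * ip g g)) = B_ i ^+ 2 * s ^+ 2 * ip g g / 2 * vconst.
  by rewrite /vproxy; ring.
have -> : nu k m x delta i ^+ 2 / 2 * ip g g = B_ i ^+ 2 * s ^+ 2 * ip g g / 2 * L.
  by rewrite nu2; ring.
apply: ler_wpM2l; last exact: vconst_le_logterm.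
by rewrite mulr_ge0 ?invr_ge0 // mulr_ge0 ?ip_ge0 // mulr_ge0 ?sqr_ge0.
Qed.

Lemma nu_max_mmd i :
  nu k m x delta i = Num.sqrt L / (2 * i%:R) *
    \big[Num.max/0]_(j < i) mmd ip Phi (dirac R (x (2 * j)%N)) (dirac R (x (2 * j)%N.+1)).
Proof.
have -> : \big[Num.max/0]_(j < i) mmd ip Phi (dirac R (x (2 * j)%N))
                                           (dirac R (x (2 * j)%N.+1)) = B_ i.
  by apply: eq_bigr => j _; rewrite mmd_dirac bb_ipnorm.
by rewrite /nu; ring.
Qed.

Lemma bb_le_sqrt_kernel j :
  b_ j <= Num.sqrt (k (x (2 * j)) (x (2 * j))) + Num.sqrt (k (x (2 * j).+1) (x (2 * j).+1)).
Proof. by rewrite bb_ipnorm !k_ip; apply: ipnormB_le. Qed.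

Lemma bb_le_mmd_Pin j :
  b_ j <= mmd ip Phi (dirac R (x (2 * j))) (Pin R m x) +
          mmd ip Phi (dirac R (x (2 * j).+1)) (Pin R m x).
Proof. by rewrite bb_ipnorm !mmd_dirac_Pin; apply: ipnormB_le_via. Qed.

Lemma bmax_le_min_max i : (i <= m)%N ->
  B_ i <= 2 * Num.min (\big[Num.max/0]_(j < (2 * m)%N) Num.sqrt (k (x j) (x j)))
                      (\big[Num.max/0]_(j < (2 * m)%N) mmd ip Phi (dirac R (x j)) (Pin R m x)).
Proof.
move=> im; set M1 := \big[Num.max/0]_(j < _) _; set M2 := \big[Num.max/0]_(j < _) _.
have M_ge0 (F : 'I_(2 * m) -> R) : (forall j, 0 <= F j) -> 0 <= \big[Num.max/0]_j F j.
  by move=> F_ge0; apply: (big_ind (fun v => 0 <= v)) => // u v u0 v0; rewrite le_max u0.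
have M1_ge0 : 0 <= M1 by apply: M_ge0 => j; apply: sqrtr_ge0.
have M2_ge0 : 0 <= M2 by apply: M_ge0 => j; rewrite mmd_dirac_Pin ipnorm_ge0.
apply/bigmax_leP; split=> [|j _]; first by rewrite mulr_ge0 // le_min M1_ge0 M2_ge0.
have [j1 j2] : (2 * j < 2 * m)%N /\ ((2 * j).+1 < 2 * m)%N by have := ltn_ord j; lia.
have M1_ge l : (l < 2 * m)%N -> Num.sqrt (k (x l) (x l)) <= M1.
  move=> lm; exact: (le_bigmax 0 (fun l : 'I_(2 * m) => Num.sqrt (k (x l) (x l)))
                               (Ordinal lm)).
have M2_ge l : (l < 2 * m)%N -> mmd ip Phi (dirac R (x l)) (Pin R m x) <= M2.
  move=> lm; exact: (le_bigmax 0 (fun l : 'I_(2 * m) => mmd ip Phi (dirac R (x l)) (Pin R m x))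
                               (Ordinal lm)).
have := bb_le_sqrt_kernel j; have := bb_le_mmd_Pin j.
have := M1_ge _ j1; have := M1_ge _ j2; have := M2_ge _ j1; have := M2_ge _ j2.
rewrite -[_ <= 2 * _]ler_pdivrMl // le_min; move=> *; apply/andP; split; lra.
Qed.

Lemma nu_le_min_max i : (i <= m)%N ->
  nu k m x delta i <=
  Num.sqrt L / (2 * i%:R) *
  (2 * Num.min (\big[Num.max/0]_(j < (2 * m)%N) Num.sqrt (k (x j) (x j)))
               (\big[Num.max/0]_(j < (2 * m)%N) mmd ip Phi (dirac R (x j)) (Pin R m x))).
Proof.
move=> im; have -> : nu k m x delta i = Num.sqrt L / (2 * i%:R) * B_ i by rewrite /nu; ring.
by apply: ler_wpM2l; rewrite ?bmax_le_min_max // divr_ge0 ?sqrtr_ge0 // mulr_ge0.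
Qed.

End KernelHalving.
End MMD.
End InnerProductSpace.

Arguments good {R H} ip {X} Phi k {m} x delta i e.

Theorem propositionB2 (R : realType) (X : Type) (H : lmodType R)
  (ip : H -> H -> R) (Phi : X -> H) (k : X -> X -> R) (m : nat)
  (x : nat -> X) (delta : R) :
  inner_product ip ->
  (forall y z, k y z = ip (Phi y) (Phi z)) ->
  0 < delta < 1 ->
  (0 < m)%N ->
  exists E : {set signs m},
    1 - delta / 2 <= prob ip Phi k x delta E /\
    forall i : nat, (1 <= i <= m)%N ->
      [/\ subgaussian_on ip Phi k x delta
            (fun e => (2 * i%:R)^-1 *: psi Phi x e i)
            (nu k m x delta i) E,
          nu k m x delta i =
            Num.sqrt (logterm m delta) / (2 * i%:R) *
            \big[Num.max/0]_(j < i) mmd ip Phi (dirac R (x (2 * j)%N))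
                                             (dirac R (x (2 * j)%N.+1)) &
          nu k m x delta i <=
            Num.sqrt (logterm m delta) / (2 * i%:R) *
            (2 * Num.min (\big[Num.max/0]_(j < (2 * m)%N) Num.sqrt (k (x j) (x j)))
                         (\big[Num.max/0]_(j < (2 * m)%N)
                             mmd ip Phi (dirac R (x j)) (Pin R m x)))].
Proof.
move=> ip_inner k_ip delta01 m_gt0.
exists [set e | good ip Phi k x delta m e]%SET.
split; first exact: prob_good.
move=> i /andP[_ i_le_m]; split.
- exact: subgaussian_good.
- exact: nu_max_mmd.
- exact: nu_le_min_max.
Qed.
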